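(* Let $n\ge 2$ be an integer and write $n=\sum_{i=r}^{k}a_i2^i$ with $a_r,a_{r+1},\dots,a_k\in\{0,1\}$ and $a_r=a_k=1$. (i) If $n$ is odd, then a permutation in $S_n$ of type $x(n)$ is an odd permutation if and only if $\sum_{i=1}^{k}a_i\equiv 1\pmod 2$. (ii) If $n$ is even, then a permutation of type $x(n)$ and a permutation of type $y(n)$ are both odd permutations if and only if $\sum_{i=r}^{k}a_i\equiv 1\pmod 2$ and $r\geq 2$ is even.
   Context: The type of a permutation is the partition of $n$ given by the lengths of the cycles (including fixed points) in its disjoint cycle decomposition. If $n=\sum_{i=1}^{t}2^{n_i}$ with $0\le n_1<n_2<\dots<n_t$ is the binary expansion of $n$, then $x(n)$ is the partition $(2^{n_t},\dots,2^{n_1})$. If $n$ is even and $n-2=\sum_{i=1}^{\ell}2^{m_i}$ with $0<m_1<\dots<m_\ell$ is the binary expansion of $n-2$, then $y(n)$ is the partition $(2^{m_\ell},\dots,2^{m_1},1,1)$. *)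

From mathcomp Require Import all_boot all_fingroup.
Set Implicit Arguments. Unset Strict Implicit. Unset Printing Implicit Defensive.

Definition bit (n i : nat) : bool := odd (n %/ 2 ^ i).

Definition cycle_type (n : nat) (s : 'S_n) : seq nat :=
  sort geq [seq #|(X : {set 'I_n})| | X <- enum (porbits s)].

Definition xpart (n : nat) : seq nat :=
  [seq 2 ^ i | i <- rev (iota 0 (trunc_log 2 n).+1) & bit n i].

Definition ypart (n : nat) : seq nat := xpart (n - 2) ++ [:: 1; 1].

From mathcomp Require Import all_boot all_fingroup.

(* A permutation of n points with c cycles has sign (-1)^(n - c), and a
   permutation of type x(n) (resp. y(n)) has popcount(n) (resp.
   popcount(n - 2) + 2) cycles.  Writing n = q 2^r with q odd, we have
   popcount(n) = popcount(q) and, for r >= 1, popcount(n - 2) + 2 =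
   popcount(q) + r, since n - 2 = 2 (q 2^(r-1) - 1) and subtracting 1 from
   q 2^(r-1) turns its r - 1 trailing zeros into ones and its lowest one into
   a zero.  For even n, x(n) and y(n) are thus both odd iff popcount(q) is odd
   and r is even. *)

(* The bound m is above the bit length of m, so every nonzero bit is counted. *)
Definition popcount (m : nat) : nat := \sum_(0 <= i < m) bit m i.

Lemma bit_small m i : m < 2 ^ i -> bit m i = false.
Proof. by move=> lt_m; rewrite /bit divn_small. Qed.

Lemma bit0E m : bit m 0 = odd m.
Proof. by rewrite /bit expn0 divn1. Qed.

Lemma bit_div_exp2 m r i : bit (m %/ 2 ^ r) i = bit m (i + r).
Proof. by rewrite /bit -divnMA -expnD addnC. Qed.

Lemma sum_bit_widen m a b : m < 2 ^ a -> a <= b ->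
  \sum_(0 <= i < b) bit m i = \sum_(0 <= i < a) bit m i.
Proof.
move=> lt_m le_ab; rewrite (big_cat_nat (leq0n a) le_ab) /=.
rewrite -[RHS]addn0; congr (_ + _).
rewrite big_nat_cond big1 // => i /andP[/andP[le_ai _] _].
by rewrite bit_small //; apply: (leq_trans lt_m); rewrite leq_exp2l.
Qed.

Lemma popcountE m K : m < 2 ^ K -> \sum_(0 <= i < K) bit m i = popcount m.
Proof.
move=> lt_m; have lt_m_m : m < 2 ^ m by apply: ltn_expl.
rewrite /popcount; case: (leqP K m) => [le_Km|/ltnW le_mK].
  by rewrite (sum_bit_widen _ _ _ lt_m le_Km).
by rewrite (sum_bit_widen _ _ _ lt_m_m le_mK).
Qed.

Lemma sum_bit_from m r K : m < 2 ^ K ->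
  \sum_(r <= i < K) bit m i = popcount (m %/ 2 ^ r).
Proof.
move=> lt_m; rewrite -{1}[r]add0n big_addn.
under eq_bigr => i _ do rewrite -bit_div_exp2.
apply: popcountE; rewrite ltn_divLR ?expn_gt0 // -expnD.
by apply: (leq_trans lt_m); rewrite leq_exp2l // addnC -leq_subLR.
Qed.

Lemma popcount_half m : popcount m = odd m + popcount m./2.
Proof.
have lt_m : m < 2 ^ m.+1 by apply: ltnW; rewrite ltn_expl.
rewrite -(popcountE _ _ lt_m) big_ltn // bit0E -divn2 -[2]expn1.
by rewrite (sum_bit_from _ 1 _ lt_m).
Qed.

Lemma popcount_double m : popcount m.*2 = popcount m.
Proof. by rewrite popcount_half odd_double doubleK. Qed.

Lemma popcount_doubleS m : popcount m.*2.+1 = (popcount m).+1.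
Proof. by rewrite popcount_half /= uphalf_double odd_double. Qed.

Lemma popcount_mul_exp2 m j : popcount (m * 2 ^ j) = popcount m.
Proof.
by elim: j => [|j IHj]; rewrite ?muln1 // expnSr mulnA muln2 popcount_double.
Qed.

Lemma popcount_pred_mul_exp2 m j :
  odd m -> popcount (m * 2 ^ j).-1 + 1 = popcount m + j.
Proof.
move=> odd_m; elim: j => [|j IHj].
  have -> : (m * 2 ^ 0).-1 = m./2.*2.
    by rewrite muln1 -{1}(odd_double_half m) odd_m.
  by rewrite addn0 popcount_double [in RHS]popcount_half odd_m addnC.
have : 0 < m * 2 ^ j by rewrite muln_gt0 expn_gt0 odd_gt0.
rewrite expnSr mulnA muln2; case: (m * 2 ^ j) IHj => // k IHj _.
by rewrite doubleS /= popcount_doubleS addSn IHj addnS.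
Qed.

Lemma popcount_mul_exp2_sub2 m r :
  odd m -> 0 < r -> popcount (m * 2 ^ r - 2) + 2 = popcount m + r.
Proof.
case: r => // r odd_m _; have := popcount_pred_mul_exp2 m r odd_m.
have : 0 < m * 2 ^ r by rewrite muln_gt0 expn_gt0 odd_gt0.
rewrite expnSr mulnA muln2; case: (m * 2 ^ r) => // k _ /= pred_sum.
by rewrite doubleS subn2 /= popcount_double [RHS]addnS -pred_sum addn1 addn2.
Qed.

Lemma size_xpart m : size (xpart m) = popcount m.
Proof.
rewrite /xpart size_map size_filter count_rev -sum1_count.
rewrite -(popcountE _ _ (trunc_log_ltn m (isT : 1 < 2))) big_mkcond.
by apply: eq_bigr => i _; case: (bit m i).
Qed.

Lemma size_ypart m : size (ypart m) = popcount (m - 2) + 2.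
Proof. by rewrite /ypart size_cat size_xpart. Qed.

Lemma odd_perm_cycle_type n (s : 'S_n) :
  odd_perm s = odd n (+) odd (size (cycle_type s)).
Proof. by rewrite /cycle_type size_sort size_map -cardE /odd_perm card_ord. Qed.

Theorem lemma4p4 (n : nat) (hn : 2 <= n) :
  (odd n ->
     forall s : 'S_n, cycle_type s = xpart n ->
       (odd_perm s <-> odd (\sum_(1 <= i < (trunc_log 2 n).+1) bit n i)))
  /\
  (~~ odd n ->
     forall s t : 'S_n, cycle_type s = xpart n -> cycle_type t = ypart n ->
       ((odd_perm s /\ odd_perm t) <->
        (odd (\sum_(logn 2 n <= i < (trunc_log 2 n).+1) bit n i)
         /\ 2 <= logn 2 n /\ ~~ odd (logn 2 n)))).
Proof.
have lt_n := trunc_log_ltn n (isT : 1 < 2).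
split=> [odd_n s ct_s | even_n s t ct_s ct_t].
  rewrite odd_perm_cycle_type ct_s size_xpart (sum_bit_from _ 1 _ lt_n) divn2.
  by rewrite popcount_half odd_n oddD /= negbK.
have [q odd_q def_n] := pfactor_coprime (isT : prime 2) (ltnW hn).
rewrite coprime2n in odd_q; set r := logn 2 n in def_n *; clearbody r.
have r_gt0 : 0 < r.
  by rewrite lt0n; apply: contra even_n => /eqP r0; rewrite def_n r0 muln1.
rewrite !odd_perm_cycle_type ct_s ct_t size_xpart size_ypart (negbTE even_n).
rewrite (sum_bit_from _ _ _ lt_n) def_n mulnK ?expn_gt0 // popcount_mul_exp2.
rewrite popcount_mul_exp2_sub2 // oddD.
case: (odd (popcount q)); case: r r_gt0 {def_n} => [|[|r']] // _ /=.
all: by rewrite ?negbK; split=> [[]|[? []]].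
Qed.
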